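(* Let $X$ be a compact topological space, let $D\subseteq X$, let $\overline{D}$ be the closure of $D$ in $X$, and put $\partial D:=\overline{D}\setminus D$. Let $\overline{\mathbb{C}}=\mathbb{C}\cup\{\infty\}$ be the Riemann sphere and let $f\colon\overline{D}\to\overline{\mathbb{C}}$ be a continuous map such that $f(D)$ is open in $\overline{\mathbb{C}}$. Let $M:=\sup_{z\in\partial D}|f(z)|\in[0,\infty]$ (with $|\infty|=\infty$) and $\overline{B}_M:=\{w\in\overline{\mathbb{C}}\colon |w|\le M\}$. Then either $f(D)\supseteq\overline{\mathbb{C}}\setminus\overline{B}_M$ (i.e. $f$ takes on $D$ all values in $\overline{\mathbb{C}}$ of modulus $>M$), or $f(\overline{D})\subseteq\overline{B}_M$.
   Context: Note that $\partial D$ is defined as $\overline{D}\setminus D$; the convention $|\infty|=\infty$ is used. *)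

From HB Require Import structures.
From mathcomp Require Import all_boot all_order all_algebra.
From mathcomp Require Import all_classical all_reals all_analysis.
From mathcomp Require Import complex.
Import Order.TTheory GRing.Theory Num.Theory.
Import numFieldNormedType.Exports.
Local Open Scope classical_set_scope.
Local Open Scope ring_scope.

(* The Riemann sphere: the one-point compactification of C = R[i]
   (complex numbers equipped with their norm topology).
   [Some z] is the complex number z, [None] is the point at infinity. *)
Definition riemann_sphere (R : realType) : topologicalType :=
  one_point_compactification (R[i] : numFieldType).

Definition sph_abs (R : realType) (w : riemann_sphere R) : \bar R :=
  match w with
  | Some z => (ComplexField.Normc.normc z)%:E
  | None => +oo%E
  end.
Arguments sph_abs {R}.

Definition sph_cball (R : realType) (M : \bar R) : set (riemann_sphere R) :=
  [set w : riemann_sphere R | (@sph_abs R w <= M)%E].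
Arguments sph_cball {R}.

From HB Require Import structures.
From mathcomp Require Import all_boot all_order all_algebra.
From mathcomp Require Import all_classical all_reals all_analysis.
From mathcomp Require Import complex.
Import Order.TTheory GRing.Theory Num.Theory.
Import numFieldNormedType.Exports.
Local Open Scope classical_set_scope.
Local Open Scope ring_scope.

(* Only the case of a finite bound M = m needs an argument.  The exterior
   U = {w | |w| > m} of the closed disc is connected, being a union of rays
   {t z | t >= 1} ∪ {oo} through oo.  Since f(closure D) is compact, hence
   closed in the Hausdorff sphere, and f maps the boundary into the disc,
   U ∩ f(D) = U ∩ f(closure D) is both open and closed in U: either it is all
   of U, or U misses f(closure D) altogether. *)

Section complex_plane.
Context {R : realType}.
Local Notation normc := (@ComplexField.Normc.normc R).
Local Notation C := (R[i] : numFieldType).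

Lemma normcE (z : C) : `|z| = (normc z)%:C%C.
Proof. by case: z. Qed.

Lemma normc_real (t : R) : normc t%:C%C = `|t|.
Proof. by rewrite /= expr0n /= addr0 sqrtr_sqr. Qed.

Lemma normc_ge0 (z : C) : 0 <= normc z.
Proof. by case: z => a b; exact: sqrtr_ge0. Qed.

Lemma Re_le_normc (z : C) : `|complex.Re z| <= normc z.
Proof.
case: z => a b /=; rewrite -sqrtr_sqr ler_sqrt ?addr_ge0 ?sqr_ge0 //.
by rewrite lerDl sqr_ge0.
Qed.

Lemma Im_le_normc (z : C) : `|complex.Im z| <= normc z.
Proof.
case: z => a b /=; rewrite -sqrtr_sqr ler_sqrt ?addr_ge0 ?sqr_ge0 //.
by rewrite lerDr sqr_ge0.
Qed.

Lemma continuous_real_complex : continuous (fun t : R => t%:C%C : C).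
Proof.
move=> t; apply/cvgrPdist_lt => -[e b]; rewrite ltcE /= => /andP[/eqP-> e0].
near=> s; rewrite -rmorphB normcE normc_real ltcR.
by near: s; apply: cvgr_dist_lt.
Unshelve. all: by end_near. Qed.

Lemma continuous_normc : continuous (normc : C -> R).
Proof.
move=> z; apply/(cvgrPdist_lt (F := @nbhs _ C z)) => e e0.
have : @nbhs _ C z (ball z e%:C%C) by apply: nbhsx_ballx; rewrite ltcR.
apply: filterS => w; rewrite /ball /= normcE ltcR; apply: le_lt_trans.
exact: (@ler_dist_dist _ (Rcomplex R)).
Qed.

Lemma compact_closed_ball_complex (x : C) (r : R) :
  0 < r -> compact (closed_ball x r%:C%C).
Proof.
move=> r0; pose reim (p : R * R) : C := p.1%:C%C + 'i%C * p.2%:C%C.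
have reim_cont : continuous reim.
  move=> p; apply: cvgD; [|apply: cvgM; first exact: cvg_cst].
  - exact: (continuous_comp cvg_fst (continuous_real_complex _)).
  - exact: (continuous_comp cvg_snd (continuous_real_complex _)).
have box_cpt : compact
    (closed_ball (complex.Re x) (2 * r) `*` closed_ball (complex.Im x) (2 * r)).
  by apply: compact_setX; apply: closed_ballR_compact; rewrite mulr_gt0.
have img_cpt := continuous_compact (continuous_subspaceT reim_cont) box_cpt.
have ball_closed : closed (closed_ball x r%:C%C) by exact: closed_ball_closed.
apply: (subclosed_compact ball_closed img_cpt) => w.
(* [closed_ballE] needs a real field; in C the closed ball is only known to
   lie in the open ball of twice the radius. *)
have -> : r%:C%C = (2 * r)%:C%C / 2 :> C.
  by rewrite rmorphM /= rmorph_nat mulrAC divff ?mul1r ?pnatr_eq0.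
have r2_gt0 : 0 < (2 * r)%:C%C :> C by rewrite ltcR mulr_gt0.
move=> /(subset_closure_half r2_gt0); rewrite /ball /= normcE ltcR => /ltW xw.
exists (complex.Re w, complex.Im w); last by rewrite /reim /= -complexE.
split; rewrite /= closed_ballE ?mulr_gt0 // /closed_ball_ /= -raddfB.
- exact: le_trans (Re_le_normc _) xw.
- exact: le_trans (Im_le_normc _) xw.
Qed.

Lemma locally_compact_complex : locally_compact [set: C].
Proof.
move=> x _; rewrite withinET; exists (closed_ball x 1%:C%C).
  exact/(filterS (@subset_closed_ball _ C x _))/nbhsx_ballx.
by split; [exact: compact_closed_ball_complex | exact: closed_ball_closed].
Qed.

Lemma hausdorff_riemann_sphere : hausdorff_space (riemann_sphere R).
Proof.
exact: one_point_compactification_hausdorff locally_compact_complex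
  (@norm_hausdorff _ C).
Qed.

Lemma compact_normc_bounded (K : set C) :
  compact K -> exists B : R, forall z, K z -> normc z <= B.
Proof.
move=> cK; have := compact_bounded
  (continuous_compact (continuous_subspaceT continuous_normc) cK).
move=> [M [_ HM]]; exists (`|M| + 1) => z Kz.
have M_lt : M < `|M| + 1 by apply: le_lt_trans (ler_norm M) _; rewrite ltrDl.
by have := HM _ M_lt (normc z) (ex_intro2 _ _ z Kz erefl); rewrite /= ger0_norm ?normc_ge0.
Qed.

End complex_plane.

Lemma connected_between {T : topologicalType} (A B : set T) :
  connected A -> A `<=` B -> B `<=` closure A -> connected B.
Proof.
move=> cA AB BA; apply: contrapT => /connectedPn[E [E_neq0 BE [clE0E1 E0clE1]]].
have AE : A `<=` E false `|` E true by rewrite -BE.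
have [AE0|AE1] := connected_subset (conj clE0E1 E0clE1) AE cA.
- have [y E1y] := E_neq0 true.
  have /(closureS AE0) clE0y : closure A y by apply: BA; rewrite BE; right.
  by have : (closure (E false) `&` E true) y by []; rewrite clE0E1.
- have [y E0y] := E_neq0 false.
  have /(closureS AE1) clE1y : closure A y by apply: BA; rewrite BE; left.
  by have : (E false `&` closure (E true)) y by []; rewrite E0clE1.
Qed.

Lemma connected_open_closed_dichotomy {T : topologicalType} {U A K : set T} :
  connected U -> open A -> closed K -> A `<=` K -> U `&` K `<=` A ->
  U `&` A = set0 \/ U `<=` A.
Proof.
move=> cU oA cK AK UKA; have [UA_neq0|/set0P/negP/negbNE/eqP UA0] :=
  pselect (U `&` A !=set0); [right|by left].
suff <- : U `&` A = U by move=> x [].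
apply: cU => //; first by exists A.
exists K => //; rewrite eqEsubset; split=> x [Ux Px]; split=> //.
- exact: AK.
- exact: UKA.
Qed.

Section riemann_sphere_exterior.
Context {R : realType}.
Local Notation normc := (@ComplexField.Normc.normc R).
Local Notation C := (R[i] : numFieldType).

Definition sph_ray (z : C) : set (riemann_sphere R) :=
  [set Some (t%:C%C * z) | t in [set t : R | 1 <= t]] `|` [set None].

Lemma connected_sph_ray (z : C) : 0 < normc z -> connected (sph_ray z).
Proof.
move=> z_gt0; apply: (connected_between
  [set (Some (t%:C%C * z) : riemann_sphere R) | t in [set t : R | 1 <= t]]);
  last 2 first.
- by move=> w ?; left.
- move=> _ [/subset_closure //|->] N [K [cK _] KN].
  have [B KB] := compact_normc_bounded _ cK.
  pose t := Num.max 1 ((`|B| + 1) / normc z).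
  have t_ge1 : 1 <= t by rewrite le_max lexx.
  exists (Some (t%:C%C * z)); split; first by exists t.
  apply: KN; left; exists (t%:C%C * z) => // /KB; apply/negP; rewrite -ltNge.
  rewrite ComplexField.Normc.normcM normc_real ger0_norm; last exact: le_trans t_ge1.
  apply: (@lt_le_trans _ _ (`|B| + 1)).
    by apply: le_lt_trans (ler_norm B) _; rewrite ltrDl.
  by rewrite -ler_pdivrMr // le_max lexx orbT.
apply: connected_continuous_connected.
  by apply/connected_intervalP => x y x_ge1 _ w /andP[xw _]; exact: le_trans xw.
apply: continuous_subspaceT => t.
apply: (continuous_comp (f := fun t : R => t%:C%C * z : C)
  (g := Some : C -> riemann_sphere R)).
  by apply: cvgM; [exact: continuous_real_complex | exact: cvg_cst].
exact: one_point_compactification_some_continuous.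
Qed.

Lemma sph_exterior_cballE (m : R) : 0 <= m ->
  ~` sph_cball m%:E = \bigcup_(z in [set z : C | m < normc z]) sph_ray z.
Proof.
move=> m_ge0; have outE w : (~` sph_cball m%:E) w <-> (m%:E < sph_abs w)%E.
  by rewrite /sph_cball /= ltNge; split=> /negP.
rewrite /sph_ray; apply/seteqP; split=> [[z|] /outE /= mz|w [z /= mz] [[t t_ge1 <-]|->]].
- exists z; first by move: mz; rewrite lte_fin.
  by left; exists 1; rewrite /= ?mul1r.
- exists (m + 1)%:C%C; last by right.
  change (m < normc (m + 1)%:C%C).
  by rewrite normc_real ger0_norm ?ltrDl // addr_ge0.
- apply/outE; rewrite /= lte_fin ComplexField.Normc.normcM normc_real.
  rewrite ger0_norm; last exact: le_trans t_ge1.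
  by apply: lt_le_trans mz _; rewrite ler_peMl // normc_ge0.
- by apply/outE; exact: ltry.
Qed.

Lemma connected_sph_exterior_cball (m : R) : 0 <= m ->
  connected (~` sph_cball m%:E).
Proof.
move=> m_ge0; rewrite sph_exterior_cballE //; apply: bigcup_connected.
  by exists None => z _; right.
by move=> z mz; apply: connected_sph_ray; exact: le_lt_trans mz.
Qed.

End riemann_sphere_exterior.

Theorem mainTheorem7 (R : realType) (X : topologicalType) (D : set X)
    (f : X -> riemann_sphere R) :
  compact [set: X] ->
  {within closure D, continuous f} ->
  open (f @` D) ->
  let M : \bar R :=
    ereal_sup ([set 0%E] `|` [set sph_abs (f z) | z in closure D `\` D]) in
  ~` sph_cball M `<=` f @` D \/ f @` closure D `<=` sph_cball M.
Proof.
move=> X_cpt f_cont fD_open M.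
have M_ge0 : (0 <= M)%E by apply: ereal_sup_ubound; left.
have boundary_le z : closure D z -> ~ D z -> (sph_abs (f z) <= M)%E.
  by move=> clDz nDz; apply: ereal_sup_ubound; right; exists z.
clearbody M; case: M M_ge0 boundary_le => [m| |] // m_ge0 boundary_le; last first.
  by right=> w _; exact: leey.
rewrite lee_fin in m_ge0.
have fclD_cpt : compact (f @` closure D).
  apply: continuous_compact f_cont _.
  exact: subclosed_compact (@closed_closure _ D) X_cpt (@subsetT _ _).
have fclD_closed := compact_closed (@hausdorff_riemann_sphere R) fclD_cpt.
have fD_sub : f @` D `<=` f @` closure D by apply: image_subset; exact: subset_closure.
have out_sub : ~` sph_cball m%:E `&` f @` closure D `<=` f @` D.
  move=> w [out [x clDx fxw]]; have [Dx|nDx] := pselect (D x); first by exists x.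
  by case: out; rewrite -fxw; exact: boundary_le.
have [out_fD0|out_fD] := connected_open_closed_dichotomy
  (connected_sph_exterior_cball _ m_ge0) fD_open fclD_closed fD_sub out_sub.
- right=> w fclDw; apply: contrapT => out.
  have : (~` sph_cball m%:E `&` f @` D) w by split=> //; exact: out_sub.
  by rewrite out_fD0.
- by left.
Qed.
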